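(* Let $n\ge1$, let $\mathcal S$ be a subset of $\{E_{ij}:1\le i,j\le n\}$ and $A\in\mathfrak{gl}(n)$. Let $\mathcal G_{\mathcal S}$ be the digraph on $\{1,\dots,n\}$ with arc $(i,j)$ iff $E_{ij}\in\mathcal S$, and $\mathcal G_A$ the digraph on $\{1,\dots,n\}$ with arc $(i,j)$ iff $A_{ij}\ne0$ (arcs $(i,i)$ being self-loops). Suppose (i) each weakly connected component of $\mathcal G_{\mathcal S}$ is strongly connected with at least two nodes; (ii) $\mathcal G_{\mathcal S}$ has at least one self-loop; (iii) the union digraph $\mathcal G_A\cup\mathcal G_{\mathcal S}$ is strongly connected. Then the real Lie algebra generated by $\{A\}\cup\mathcal S$ equals $\mathfrak{gl}(n)$.
   Context: $E_{ij}$ is the $n\times n$ matrix with $(i,j)$ entry $1$ and others $0$; $\mathfrak{gl}(n)$ is the Lie algebra of real $n\times n$ matrices with bracket $[X,Y]=XY-YX$. A weakly connected component of a digraph is a connected component when directions are ignored; strongly connected means all pairs of nodes are mutually reachable via directed paths; the union digraph has the union of arc sets. *)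

From HB Require Import structures.
From mathcomp Require Import all_boot all_order all_algebra.
From mathcomp Require Export reals.
Set Implicit Arguments. Unset Strict Implicit. Unset Printing Implicit Defensive.
Import GRing.Theory Num.Theory.
Local Open Scope ring_scope.

Definition lie_bracket (R : ringType) (n : nat) (X Y : 'M[R]_n) : 'M[R]_n :=
  X *m Y - Y *m X.

Definition lie_subalgebra (R : ringType) (n : nat) (L : 'M[R]_n -> Prop) : Prop :=
  [/\ L 0,
      (forall X Y, L X -> L Y -> L (X + Y)),
      (forall (c : R) X, L X -> L (c *: X)) &
      (forall X Y, L X -> L Y -> L (lie_bracket X Y))].

Definition in_lie_generated (R : ringType) (n : nat)
    (Gen : 'M[R]_n -> Prop) (M : 'M[R]_n) : Prop :=
  forall L : 'M[R]_n -> Prop, lie_subalgebra L -> (forall X, Gen X -> L X) -> L M.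

Definition weakly_connected n (e : rel 'I_n) (i j : 'I_n) : bool :=
  connect (fun x y => e x y || e y x) i j.

(* G_S : arc (i,j) iff E_ij \in S *)
Definition arcS n (S : {set 'I_n * 'I_n}) : rel 'I_n := fun i j => (i, j) \in S.

Definition arcA (R : ringType) n (A : 'M[R]_n) : rel 'I_n := fun i j => A i j != 0.

From HB Require Import structures.
From mathcomp Require Import all_boot all_order all_algebra.
From mathcomp Require Import reals.
Set Implicit Arguments. Unset Strict Implicit.
Import GRing.Theory Num.Theory.
Local Open Scope ring_scope.

(* Fix a Lie subalgebra L containing A, every E_ij with (i,j) in S, and a
   self-loop E_kk. The set of q with E_kq in L contains k and is closed under
   the arcs (q,w) of G_S, as [E_kq, E_qw] = E_kw for w != k. It is also closed
   under the arcs (q,w) of G_A: for an idempotent E in L, EZ - EZE lies in L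
   because [E,Z] + [E,[E,Z]] = 2(EZ - EZE); with E = E_kk and Z = [E_kq, A]
   this is row k of Z off column k, and its bracket with E_ww' for an arc
   (w,w') of S is A_qw E_kw'. Since (w,w') lies on a cycle of G_S, E_kw
   follows. Strong connectivity of G_A ∪ G_S thus puts row k in L, the
   transposed argument puts column k in L, and the brackets [E_ik, E_kj]
   give everything else. *)

Lemma connect_out_arc (T : finType) (e : rel T) x y :
  connect e x y -> y != x -> exists z, e x z.
Proof.
case/connectP=> [[|z p]] /=; first by move=> _ ->; rewrite eqxx.
by case/andP=> exz _ _ _; exists z.
Qed.

Lemma connect_in_arc (T : finType) (e : rel T) x y :
  connect e y x -> y != x -> exists z, e z x.
Proof.
move=> yx_conn yx.
have xy_rev : connect [rel u v | e v u] x y by rewrite connect_rev.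
by have [z] := connect_out_arc xy_rev yx; exists z.
Qed.

Lemma connect_propagate (T : finType) (e : rel T) (P : T -> Prop) :
  (forall x y, e x y -> P x -> P y) -> forall x y, connect e x y -> P x -> P y.
Proof.
move=> eP x _ /connectP [p + ->]; elim: p x => //= z p IHp x /andP [exz pz] Px.
exact: IHp pz (eP _ _ exz Px).
Qed.

Lemma connect_sym_rev (T : finType) (e : rel T) :
  connect_sym e -> connect_sym [rel x y | e y x].
Proof. by move=> sym_e x y; rewrite !connect_rev /= sym_e. Qed.

Lemma weakly_connected_sym n (e : rel 'I_n) :
  (forall i j, weakly_connected e i j -> connect e i j) -> connect_sym e.
Proof.
move=> weak_strong; apply: symmetric_from_pre => x y exy; apply: weak_strong.
rewrite /weakly_connected (sym_connect_sym (fun u v => orbC (e u v) (e v u))).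
by apply: connect_sub _ _ _ exy => u v euv; rewrite connect1 ?euv.
Qed.

Lemma mul_delta_mx_mul (R : nzRingType) n (a b c d : 'I_n) (X : 'M[R]_n) :
  delta_mx a b *m X *m delta_mx c d = X b c *: delta_mx a d.
Proof.
apply/matrixP=> i j.
rewrite !mxE (bigD1 c) //= big1 => [|s /negPf cs]; last first.
  by rewrite [delta_mx c d s j]mxE cs mulr0.
rewrite !mxE eqxx addr0 (bigD1 b) //= big1 => [|t /negPf bt]; last first.
  by rewrite mxE bt andbF mul0r.
by rewrite mxE eqxx andbT addr0; case: (i == a); case: (j == d);
  rewrite ?mul1r ?mul0r ?mulr1 ?mulr0.
Qed.

Lemma lie_bracket_idem_mask (R : nzRingType) n (E X : 'M[R]_n) :
  E *m E = E ->
  lie_bracket E X + lie_bracket E (lie_bracket E X)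
    = (E *m X - E *m X *m E) *+ 2.
Proof.
move=> idemE; rewrite /lie_bracket mulmxBr mulmxBl !mulmxA idemE.
rewrite -[X *m E *m E]mulmxA idemE mulr2n.
by rewrite opprB addrCA subrKA.
Qed.

Lemma lie_subalgebra_idem_mask (R : fieldType) n (L : 'M[R]_n -> Prop)
    (E X : 'M[R]_n) :
  2%:R != 0 :> R -> lie_subalgebra L -> L E -> E *m E = E -> L X ->
  L (E *m X - E *m X *m E).
Proof.
move=> two_neq0 [_ LD LZ LB] LE idemE LX.
have := LZ 2%:R^-1 _ (LD _ _ (LB _ _ LE LX) (LB _ _ LE (LB _ _ LE LX))).
by rewrite lie_bracket_idem_mask // -scaler_nat scalerA mulVf ?scale1r.
Qed.

Lemma lie_bracket_mask_delta (R : nzRingType) n (A : 'M[R]_n)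
    (k q w w' : 'I_n) :
  q != w -> w != k -> w' != k ->
  lie_bracket (delta_mx k k *m lie_bracket (delta_mx k q) A
                 - delta_mx k k *m lie_bracket (delta_mx k q) A *m delta_mx k k)
              (delta_mx w w') = A q w *: delta_mx k w'.
Proof.
move=> qw wk w'k; set Z := lie_bracket _ A; set P := delta_mx k k.
rewrite [LHS]/lie_bracket.
have -> : delta_mx w w' *m (P *m Z - P *m Z *m P) = 0.
  by rewrite mulmxBr !mulmxA mul_delta_mx_0 // !mul0mx subrr.
rewrite subr0 mulmxBl -[P *m Z *m P *m _]mulmxA.
rewrite mul_delta_mx_0 1?eq_sym // mulmx0 subr0.
rewrite /Z /P /lie_bracket mulmxBr mulmxBl !mulmxA mul_delta_mx.
rewrite mul_delta_mx_mul.
by rewrite -[_ *m delta_mx k q *m _]mulmxA mul_delta_mx_0 // mulmx0 subr0.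
Qed.

Lemma lie_subalgebra_trmx (R : comNzRingType) n (L : 'M[R]_n -> Prop) :
  lie_subalgebra L -> lie_subalgebra (fun X => L X^T).
Proof.
case=> L0 LD LZ LB; split=> [|X Y LX LY|c X LX|X Y LX LY] /=.
- by rewrite trmx0.
- by rewrite linearD; apply: LD.
- by rewrite linearZ; apply: LZ.
- by rewrite /lie_bracket linearB /= !trmx_mul; apply: LB.
Qed.

Lemma lie_subalgebra_delta_cross (R : nzRingType) n (L : 'M[R]_n -> Prop)
    (k : 'I_n) :
  lie_subalgebra L -> (forall q, L (delta_mx k q)) ->
  (forall q, L (delta_mx q k)) -> forall M, L M.
Proof.
move=> [L0 LD LZ LB] Lrow Lcol M; rewrite (matrix_sum_delta M).
have Lij i j : L (delta_mx i j).
  have := LB _ _ (Lcol i) (Lrow j).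
  rewrite /lie_bracket mul_delta_mx mul_delta_mx_cond.
  have [<- Lii|_] := eqVneq j i; last by rewrite mulr0n subr0.
  by have := LD _ _ Lii (Lrow k); rewrite subrK.
by apply: big_ind => // i _; apply: big_ind => // j _; apply: LZ.
Qed.

Section DeltaRow.

Variables (R : fieldType) (n : nat) (L : 'M[R]_n -> Prop).
Variables (A : 'M[R]_n) (e : rel 'I_n) (k : 'I_n).
Hypotheses (two_neq0 : 2%:R != 0 :> R) (subL : lie_subalgebra L).
Hypotheses (LA : L A) (Le : forall i j, e i j -> L (delta_mx i j)).
Hypothesis Lkk : L (delta_mx k k).
Hypotheses (sym_e : connect_sym e) (e_out : forall x, exists y, e x y).

Lemma delta_row_step q w : e q w -> L (delta_mx k q) -> L (delta_mx k w).
Proof.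
move=> eqw Lq; have [->|wk] := eqVneq w k; first exact: Lkk.
have [_ _ _ LB] := subL; have := LB _ _ Lq (Le eqw).
by rewrite /lie_bracket mul_delta_mx mul_delta_mx_0 ?subr0.
Qed.

Lemma delta_row_stepA q w :
  A q w != 0 -> L (delta_mx k q) -> L (delta_mx k w).
Proof.
move=> Aqw Lq; have [->|wk] := eqVneq w k; first exact: Lkk.
have [<-|qw] := eqVneq q w; first exact: Lq.
have [w' eww'] := e_out w.
suff Lw' : L (delta_mx k w').
  by apply: connect_propagate delta_row_step _ _ _ Lw'; rewrite sym_e connect1.
have [->|w'k] := eqVneq w' k; first exact: Lkk.
have [_ _ LZ LB] := subL.
have LY := lie_subalgebra_idem_mask two_neq0 subL Lkk (mul_delta_mx _ _ _)
  (LB _ _ Lq LA).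
have := LZ (A q w)^-1 _ (LB _ _ LY (Le eww')).
by rewrite lie_bracket_mask_delta // scalerA mulVf ?scale1r.
Qed.

Lemma delta_row_full :
  (forall j, connect (fun x y => arcA A x y || e x y) k j) ->
  forall q, L (delta_mx k q).
Proof.
move=> reach q.
apply: (connect_propagate (P := fun j => L (delta_mx k j)) _ (reach q) Lkk).
by move=> x y /orP [/delta_row_stepA | /delta_row_step].
Qed.

End DeltaRow.

Lemma delta_col_full (R : fieldType) n (L : 'M[R]_n -> Prop) (A : 'M[R]_n)
    (e : rel 'I_n) (k : 'I_n) :
  2%:R != 0 :> R -> lie_subalgebra L -> L A ->
  (forall i j, e i j -> L (delta_mx i j)) -> L (delta_mx k k) ->
  connect_sym e -> (forall x, exists y, e y x) ->
  (forall j, connect (fun x y => arcA A x y || e x y) j k) ->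
  forall q, L (delta_mx q k).
Proof.
move=> two_neq0 subL LA Le Lkk sym_e e_in reach q; rewrite -trmx_delta.
apply: (delta_row_full (L := fun X => L X^T) (A := A^T)
                      (e := [rel x y | e y x])).
- exact: two_neq0.
- exact: lie_subalgebra_trmx.
- by rewrite trmxK.
- by move=> i j eji; rewrite trmx_delta; apply: Le.
- by rewrite trmx_delta.
- exact: connect_sym_rev.
- exact: e_in.
- move=> j; rewrite (eq_connect (e' := [rel x y | arcA A y x || e y x])).
    by rewrite connect_rev; apply: reach.
  by move=> x y; rewrite /arcA mxE.
Qed.

Theorem lemma8 (R : realType) (n : nat) (S : {set 'I_n * 'I_n}) (A : 'M[R]_n) :
  (0 < n)%N ->
  (* (i) every weakly connected component of G_S is strongly connected
         and has at least two nodes *)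
  (forall i j : 'I_n, weakly_connected (arcS S) i j ->
       connect (arcS S) i j) ->
  (forall i : 'I_n, exists j : 'I_n, j != i /\ weakly_connected (arcS S) i j) ->
  (* (ii) G_S has a self-loop *)
  (exists i : 'I_n, (i, i) \in S) ->
  (* (iii) G_A ∪ G_S is strongly connected *)
  (forall i j : 'I_n, connect (fun x y => arcA A x y || arcS S x y) i j) ->
  (* the Lie algebra generated by {A} ∪ S is gl(n) *)
  forall M : 'M[R]_n,
    in_lie_generated
      (fun X => X = A \/ exists i j : 'I_n, (i, j) \in S /\ X = delta_mx i j) M.
Proof.
move=> _ weak_strong two_nodes [k Skk] strong M L subL genL.
set e := arcS S.
have Le i j : e i j -> L (delta_mx i j).
  by move=> eij; apply: genL; right; exists i, j.
have LA : L A by apply: genL; left.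
have Lkk := Le _ _ Skk.
have two_neq0 : 2%:R != 0 :> R by rewrite pnatr_eq0.
have sym_e : connect_sym e := weakly_connected_sym weak_strong.
have [e_out e_in] : (forall x, exists y, e x y) /\ (forall x, exists y, e y x).
  split=> x; have [y [yx /weak_strong exy]] := two_nodes x.
    exact: connect_out_arc exy yx.
  by apply: connect_in_arc yx; rewrite sym_e.
apply: (lie_subalgebra_delta_cross (k := k) subL) => q.
  exact: delta_row_full two_neq0 subL LA Le Lkk sym_e e_out (strong k) q.
exact: delta_col_full two_neq0 subL LA Le Lkk sym_e e_in (strong^~ k) q.
Qed.
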